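(* Let $(A,\succ,\prec)$ be an anti-pre-Novikov algebra, $s\in A\otimes A$ define a factorizable anti-pre-Novikov bialgebra $(A,\succ,\prec,\Delta_{\succ,s},\Delta_{\prec,s})$, and $\lambda\in k$ nonzero; let $(A,\succ,\prec,P,\omega)$ be the corresponding quadratic Rota–Baxter anti-pre-Novikov algebra of weight $\lambda$, i.e. $\omega(x,y)=-\lambda\langle T_{s+\tau(s)}^{-1}(x),y\rangle$ and $P=T_s\omega^\sharp$. Then $(A,\succ,\prec,\Delta_{\succ,\tau(s)},\Delta_{\prec,\tau(s)})$ is a factorizable anti-pre-Novikov bialgebra, and its corresponding quadratic Rota–Baxter anti-pre-Novikov algebra of weight $\lambda$ (with $\omega'(x,y)=-\lambda\langle T_{\tau(s)+s}^{-1}(x),y\rangle$ and $P'=T_{\tau(s)}\omega'^\sharp$) is $(A,\succ,\prec,-\lambda I-P,\omega)$.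
   Context: $A$ is finite-dimensional over a field $k$. An anti-pre-Novikov algebra is $(A,\succ,\prec)$ such that with $x\circ y=x\succ y+x\prec y$: $(x\circ y-y\circ x)\succ z=y\succ(x\succ z)-x\succ(y\succ z)$; $x\prec(y\circ z)=(y\succ x)\prec z-(x\prec y)\prec z-y\succ(x\prec z)$; $(x\circ y)\succ z=-(x\succ z)\prec y$; $(x\prec y)\prec z=(x\prec z)\prec y$; $(x\circ y-y\circ x)\prec z=x\succ(y\circ z)-y\succ(x\circ z)$. Notation: $x\odot y=x\succ y+y\prec x$; $L_\ast(x)y=x\ast y$, $R_\ast(x)y=y\ast x$; $L_{\star}=L_{\circ}+R_{\circ}$, $L_{\odot}=L_{\succ}+R_{\prec}$; $\tau$ is the flip; $T_r:A^*\to A$, $\langle T_r(\zeta),\eta\rangle=\langle r,\zeta\otimes\eta\rangle$; for a bilinear form $\omega$, $\omega^\sharp:A\to A^*$, $\langle\omega^\sharp(x),y\rangle=\omega(x,y)$. $r$ is invariant if $(I\otimes L_{\star}(x)-L_{\succ}(x)\otimes I)r=0$ and $(L_{\circ}(x)\otimes I-I\otimes L_{\odot}(x))r=0$ for all $x$. For $s=\sum_i a_i\otimes b_i$ the APN-YBE is $\sum_{i,j}a_i\circ a_j\otimes b_i\otimes b_j+\sum_{i,j}a_j\otimes a_i\otimes(b_i\odot b_j)+\sum_{i,j}a_i\otimes(b_i\prec a_j)\otimes b_j=0$. With $\Delta_{\succ,r}(x)=(I\otimes L_{\star}(x)-L_{\succ}(x)\otimes I)r$, $\Delta_{\prec,r}(x)=(L_{\circ}(x)\otimes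 I-I\otimes L_{\odot}(x))r$, the datum $(A,\succ,\prec,\Delta_{\succ,r},\Delta_{\prec,r})$ is a factorizable anti-pre-Novikov bialgebra when $r$ solves the APN-YBE, $r+\tau(r)$ is invariant, and $T_{r+\tau(r)}$ is a linear isomorphism. A quadratic Rota–Baxter anti-pre-Novikov algebra of weight $\lambda$ is $(A,\succ,\prec,P,\omega)$ with $P(x)\prec P(y)=P(P(x)\prec y+x\prec P(y)+\lambda x\prec y)$, $P(x)\succ P(y)=P(P(x)\succ y+x\succ P(y)+\lambda x\succ y)$, $\omega$ non-degenerate symmetric with $\omega(x\prec y,z)=-\omega(x,z\circ y)$, $\omega(x\succ y,z)=\omega(x\circ z+z\circ x,y)$, and $\omega(P(x),y)+\omega(x,P(y))+\lambda\omega(x,y)=0$. *)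

(* A finite-dimensional algebra A over a field K is modelled as
   K^n = 'rV[K]_n with a fixed basis e_i = ev i; bilinear products are given by
   structure constants.  A (x) A is modelled by n x n matrices
   (r = \sum_(i,j) r i j e_i (x) e_j), A^* by row vectors (dual basis). *)
From HB Require Import structures.
From mathcomp Require Import all_boot all_algebra.
Set Implicit Arguments. Unset Strict Implicit. Unset Printing Implicit Defensive.
Import GRing.Theory.
Local Open Scope ring_scope.

Definition bmul (K : fieldType) (n : nat) (c : 'I_n -> 'I_n -> 'rV[K]_n)
  (x y : 'rV[K]_n) : 'rV[K]_n :=
  \sum_(i < n) \sum_(j < n) (x 0 i * y 0 j) *: c i j.

Section APN.
Variables (K : fieldType) (n : nat).
Variables (succ prec : 'rV[K]_n -> 'rV[K]_n -> 'rV[K]_n).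

Definition circ x y := succ x y + prec x y.
Definition odot x y := succ x y + prec y x.
Definition Lstar x y := circ x y + circ y x.

Definition is_APN : Prop := forall x y z,
  [/\ succ (circ x y - circ y x) z = succ y (succ x z) - succ x (succ y z),
      prec x (circ y z) = prec (succ y x) z - prec (prec x y) z - succ y (prec x z),
      succ (circ x y) z = - prec (succ x z) y,
      prec (prec x y) z = prec (prec x z) y &
      prec (circ x y - circ y x) z = succ x (circ y z) - succ y (circ x z)].

Definition ev (i : 'I_n) : 'rV[K]_n := delta_mx 0 i.
Definition tens (x y : 'rV[K]_n) : 'M[K]_n := x^T *m y.
Definition tmap (f g : 'rV[K]_n -> 'rV[K]_n) (r : 'M[K]_n) : 'M[K]_n :=
  \sum_(i < n) \sum_(j < n) r i j *: tens (f (ev i)) (g (ev j)).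

Definition invariant (r : 'M[K]_n) : Prop := forall x,
  tmap id (Lstar x) r - tmap (succ x) id r = 0 /\
  tmap (circ x) id r - tmap id (odot x) r = 0.

(* coordinate (p,q,r) of x (x) y (x) z *)
Definition tens3 (x y z : 'rV[K]_n) (p q r : 'I_n) : K := x 0 p * y 0 q * z 0 r.

Definition APN_YBE (s : 'M[K]_n) : Prop := forall p q r : 'I_n,
  \sum_(i < n) \sum_(j < n) \sum_(k < n) \sum_(l < n)
     s i j * s k l *
     (tens3 (circ (ev i) (ev k)) (ev j) (ev l) p q r
      + tens3 (ev k) (ev i) (odot (ev j) (ev l)) p q r
      + tens3 (ev i) (prec (ev j) (ev k)) (ev l) p q r) = 0.

(* T_r : A^* -> A, <T_r(zeta), eta> = <r, zeta (x) eta> *)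
Definition Tmap (r : 'M[K]_n) (zeta : 'rV[K]_n) : 'rV[K]_n := zeta *m r.

(* factorizable APN bialgebra (A, ≻, ≺, Δ_{≻,r}, Δ_{≺,r}); tau r = r^T *)
Definition factorizable (r : 'M[K]_n) : Prop :=
  [/\ APN_YBE r, invariant (r + r^T) & bijective (Tmap (r + r^T))].

Definition pairing (x zeta : 'rV[K]_n) : K := \sum_(i < n) x 0 i * zeta 0 i.

Definition rb_omega (lam : K) (r : 'M[K]_n) (x y : 'rV[K]_n) : K :=
  - lam * pairing y (x *m invmx (r + r^T)).

Definition sharp (w : 'rV[K]_n -> 'rV[K]_n -> K) (x : 'rV[K]_n) : 'rV[K]_n :=
  \row_j w x (ev j).

Definition rb_P (lam : K) (r : 'M[K]_n) (x : 'rV[K]_n) : 'rV[K]_n :=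
  Tmap r (sharp (rb_omega lam r) x).

End APN.

From Pilot Require Import Defs.
From HB Require Import structures.
From mathcomp Require Import all_boot all_algebra.
From mathcomp Require Import ring.
Set Implicit Arguments. Unset Strict Implicit. Unset Printing Implicit Defensive.
Import GRing.Theory.
Local Open Scope ring_scope.

(* Let t = s + s^T and Q = T_s T_t^-1, i.e. v |-> v t^-1 s.  Invariance of t moves
   the multiplication operators of the APN-YBE tensor of s across t, so that the
   contraction of that tensor with xi (x) eta is the weight -1 Rota-Baxter defect of Q
   for the product x ⊙ y at (eta t, xi t).  Since T_{s^T} T_t^-1 = I - Q, and the
   Rota-Baxter defect of weight lam is unchanged under P |-> -lam I - P, the APN-YBE
   tensors of s and s^T vanish together.  Finally omega only depends on s + s^T, and
   P + P' = T_t omega^sharp = -lam I. *)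

Section RotaBaxterDefect.
Variables (R : nzRingType) (V : lmodType R) (lam : R).

Definition rb_defect (m : V -> V -> V) (P : V -> V) x y :=
  m (P x) (P y) - P (m (P x) y + m x (P y) + lam *: m x y).

Lemma rb_defect_compl (m : {bilinear V -> V -> V}) (P : {linear V -> V}) (P' : V -> V) :
  (forall v, P v + P' v = - lam *: v) ->
  forall x y, rb_defect m P' x y = rb_defect m P x y.
Proof.
move=> PP' x y.
have P'E v : P' v = - (lam *: v + P v).
  by apply: (addrI (P v)); rewrite PP' opprD addrCA subrr addr0 scaleNr.
rewrite /rb_defect; set w := m (P x) y + m x (P y) + lam *: m x y.
have mP'l u v : m (P' u) v = - (lam *: m u v + m (P u) v).
  by rewrite P'E linearNl linearDl linearZl_LR.
have mP'r u v : m u (P' v) = - (lam *: m u v + m u (P v)).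
  by rewrite P'E linearNr linearDr linearZr_LR.
have -> : m (P' x) y + m x (P' y) + lam *: m x y = - w.
  by rewrite mP'l mP'r /w !opprD addrACA addrAC subrK addrC.
have -> : m (P' x) (P' y) = lam *: w + m (P x) (P y).
  rewrite mP'l !mP'r scalerN -opprD opprK /w !scalerDr addrA; congr (_ + _).
  by rewrite -addrA addrC [_ + lam *: m (P x) y]addrC.
by rewrite P'E opprK linearN scalerN [lam *: w + _]addrC -addrA addNKr.
Qed.
End RotaBaxterDefect.

Section RowCoordinates.
Variables (K : fieldType) (n : nat).
Implicit Types (r : 'M[K]_n) (f g : 'rV[K]_n -> 'rV[K]_n).

Lemma evE (i j : 'I_n) : ev K i 0 j = (i == j)%:R.
Proof. by rewrite mxE eqxx eq_sym. Qed.

Lemma sum_mul_ev (F : 'I_n -> K) j : \sum_i F i * ev K i 0 j = F j.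
Proof.
rewrite (bigD1 j) //= evE eqxx mulr1 big1 ?addr0 // => i /negbTE ij.
by rewrite evE ij mulr0.
Qed.

Lemma pairing_ev j (v : 'rV[K]_n) : pairing (ev K j) v = v 0 j.
Proof.
rewrite /pairing -[RHS](sum_mul_ev (fun i => v 0 i)).
by apply: eq_bigr => i _; rewrite mulrC !evE eq_sym.
Qed.

Lemma mul_rV_lin1_linear f : linear f -> forall u, u *m lin1_mx f = f u.
Proof. by move=> fL; exact: (mul_rV_lin1 (HB.pack f (GRing.isLinear.Build _ _ _ _ f fL))). Qed.

Lemma tmap_mx f g (F G : 'M[K]_n) r :
  (forall v, v *m F = f v) -> (forall v, v *m G = g v) -> tmap f g r = F^T *m r *m G.
Proof.
move=> fF gG; rewrite [in RHS](matrix_sum_delta r) !mulmx_sumr !mulmx_suml.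
apply: eq_bigr => i _; rewrite mulmx_sumr mulmx_suml; apply: eq_bigr => j _.
rewrite -fF -gG /tens trmx_mul -scalemxAr -scalemxAl; congr (_ *: _).
by rewrite !mulmxA -[F^T *m _ *m _]mulmxA trmx_delta mul_delta_mx.
Qed.

Lemma ev_mulmx (M : 'M[K]_n) i j : (ev K i *m M) 0 j = M i j.
Proof. by rewrite -rowE mxE. Qed.

Lemma lin1_mxE f i j : lin1_mx f i j = f (ev K i) 0 j.
Proof. by rewrite mxE. Qed.

Lemma sum2_mul_ev (G : 'I_n -> 'I_n -> K) u v :
  \sum_a \sum_b G a b * (ev K a 0 u * ev K b 0 v) = G u v.
Proof.
under eq_bigr => a _ do under eq_bigr => b _ do rewrite mulrA.
by under eq_bigr => a _ do rewrite sum_mul_ev; rewrite sum_mul_ev.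
Qed.

Lemma bilinear_expandl
    (m : {bilinear 'rV[K]_n -> 'rV[K]_n -> 'rV[K]_n}) (x y : 'rV[K]_n) :
  m x y = \sum_i x 0 i *: m (ev K i) y.
Proof.
by rewrite {1}(row_sum_delta x) linear_sumlz; apply: eq_bigr => i _; rewrite linearZl_LR.
Qed.

Lemma bilinear_expandr
    (m : {bilinear 'rV[K]_n -> 'rV[K]_n -> 'rV[K]_n}) (x y : 'rV[K]_n) :
  m x y = \sum_j y 0 j *: m x (ev K j).
Proof.
by rewrite {1}(row_sum_delta y) linear_sumr; apply: eq_bigr => j _; rewrite linearZr_LR.
Qed.

End RowCoordinates.

Section StructureConstants.
Variables (K : fieldType) (n : nat) (c : 'I_n -> 'I_n -> 'rV[K]_n).

Lemma bmul_is_bilinear : bilinear_for *:%R *:%R (bmul c).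
Proof.
split=> [y a u v | x a u v] /=; rewrite /bmul scaler_sumr -big_split;
  apply: eq_bigr => i _ /=; rewrite scaler_sumr -big_split; apply: eq_bigr => j _ /=;
  by rewrite !mxE scalerA -scalerDl; congr (_ *: _); ring.
Qed.

HB.instance Definition _ := bilinear_isBilinear.Build K _ _ _ _ _ (bmul c) bmul_is_bilinear.

End StructureConstants.

Section APNStructureConstants.
Variables (K : fieldType) (n : nat) (cs cp : 'I_n -> 'I_n -> 'rV[K]_n).
Implicit Types (x y z v xi eta : 'rV[K]_n) (r t : 'M[K]_n).
Local Notation succ := (bmul cs).
Local Notation prec := (bmul cp).
Local Notation circ := (Defs.circ succ prec).
Local Notation odot := (Defs.odot succ prec).
Local Notation Lstar := (Defs.Lstar succ prec).

Lemma odot_is_bilinear : bilinear_for *:%R *:%R odot.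
Proof.
by split=> [y a u v | x a u v] /=; rewrite /Defs.odot linearPl linearPr scalerDr addrACA.
Qed.

HB.instance Definition _ := bilinear_isBilinear.Build K _ _ _ _ _ odot odot_is_bilinear.

Lemma Lstar_odot x y : Lstar x y = odot x y + odot y x.
Proof. by apply/rowP => j; rewrite !mxE; ring. Qed.

Lemma odot_sub_Lstar x y : odot x y - Lstar x y = - odot y x.
Proof. by rewrite Lstar_odot opprD addNKr. Qed.

Lemma circ_expandl x y : circ x y = \sum_i x 0 i *: circ (ev K i) y.
Proof.
rewrite /Defs.circ !(bilinear_expandl _ x) -big_split.
by apply: eq_bigr => i _; rewrite scalerDr.
Qed.

Lemma mul_rV_lin1_succ x v : v *m lin1_mx (succ x) = succ x v.
Proof. exact/mul_rV_lin1_linear/linearPr. Qed.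

Lemma mul_rV_lin1_circ x v : v *m lin1_mx (circ x) = circ x v.
Proof.
by apply/mul_rV_lin1_linear => a u w; rewrite /Defs.circ !linearPr scalerDr addrACA.
Qed.

Lemma mul_rV_lin1_odot x v : v *m lin1_mx (odot x) = odot x v.
Proof. exact/mul_rV_lin1_linear/linearPr. Qed.

Lemma mul_rV_lin1_Lstar x v : v *m lin1_mx (Lstar x) = Lstar x v.
Proof.
by apply/mul_rV_lin1_linear => a u w; rewrite !Lstar_odot linearPr linearPl scalerDr addrACA.
Qed.

Lemma lin1_mx_circ x : lin1_mx (circ x) = lin1_mx (succ x) + lin1_mx (prec x).
Proof. by apply/matrixP => i j; rewrite !mxE. Qed.

(* Qualified because eqtype also exports an [invariant]. *)
Lemma invariant_dual t : Defs.invariant succ prec t ->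
  (forall z xi, xi *m (lin1_mx (circ z))^T *m t = odot z (xi *m t)) /\
  (forall z xi, xi *m (lin1_mx (succ z))^T *m t = Lstar z (xi *m t)).
Proof.
move=> inv; have mx_id v : v *m 1%:M = id v by rewrite mulmx1.
have hcirc z : (lin1_mx (circ z))^T *m t = t *m lin1_mx (odot z).
  have /subr0_eq := (inv z).2.
  rewrite (tmap_mx _ (mul_rV_lin1_circ z) mx_id) (tmap_mx _ mx_id (mul_rV_lin1_odot z)).
  by rewrite trmx1 mul1mx mulmx1.
have hstar z : (lin1_mx (succ z))^T *m t = t *m lin1_mx (Lstar z).
  have /subr0_eq := (inv z).1.
  rewrite (tmap_mx _ mx_id (mul_rV_lin1_Lstar z)) (tmap_mx _ (mul_rV_lin1_succ z) mx_id).
  by rewrite trmx1 mul1mx mulmx1.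
by split=> z xi;
  rewrite -mulmxA ?hcirc ?hstar mulmxA ?mul_rV_lin1_odot ?mul_rV_lin1_Lstar.
Qed.

(* The APN-YBE tensor of r with xi (x) eta contracted against its first two legs;
   (lin1_mx f)^T is the matrix of the dual map f^*. *)
Definition ybe_contract r xi eta : 'rV[K]_n :=
  xi *m (lin1_mx (circ (eta *m r^T)))^T *m r + odot (eta *m r) (xi *m r)
  + eta *m (lin1_mx (prec (xi *m r)))^T *m r.

Lemma ybe_contract_rb_defect r xi eta :
  Defs.invariant succ prec (r + r^T) -> r + r^T \in unitmx ->
  let t := r + r^T in
  ybe_contract r xi eta =
    rb_defect (-1) odot (mulmxr (invmx t *m r)) (eta *m t) (xi *m t).
Proof.
move=> inv tU t; set Q := mulmxr _.
have QE w : Q (w *m t) = w *m r by rewrite /Q /= mulmxA mulmxK.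
have eta_rT : eta *m r^T = eta *m t - Q (eta *m t).
  by rewrite QE /t mulmxDr addrC addKr.
have [circ_dual succ_dual] := invariant_dual inv.
have term1 z : xi *m (lin1_mx (circ z))^T *m r = Q (odot z (xi *m t)).
  by rewrite -circ_dual QE.
have term3 w : eta *m (lin1_mx (prec w))^T *m r = - Q (odot (eta *m t) w).
  rewrite -linearN -odot_sub_Lstar -circ_dual -succ_dual -!mulmxBl -QE.
  by rewrite lin1_mx_circ [(_ + _)^T]linearD /= [eta *m (_ + _)]mulmxDr addrC addKr.
rewrite /ybe_contract /rb_defect term1 term3 -!QE eta_rT linearBl /=.
move: (odot _ _) (odot (Q _) _) (odot _ (Q _)) (odot (Q _) (Q _)) => a b c d.
by rewrite /Q scaleN1r !linearD !linearN /=; apply/rowP => j; rewrite !mxE; ring.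
Qed.

Lemma ybe_term_circ r p q c :
  \sum_i \sum_j \sum_k \sum_l
    r i j * r k l * tens3 (circ (ev K i) (ev K k)) (ev K j) (ev K l) p q c
  = (ev K p *m (lin1_mx (circ (ev K q *m r^T)))^T *m r) 0 c.
Proof.
transitivity (\sum_i \sum_k r i q * r k c * circ (ev K i) (ev K k) 0 p).
  apply: eq_bigr => i _; rewrite exchange_big; apply: eq_bigr => k _ /=.
  rewrite -(sum2_mul_ev (fun j l => r i j * r k l * circ (ev K i) (ev K k) 0 p)).
  by apply: eq_bigr => j _; apply: eq_bigr => l _; rewrite /tens3; ring.
rewrite exchange_big mxE; apply: eq_bigr => k _ /=.
rewrite ev_mulmx mxE lin1_mxE circ_expandl summxE big_distrl; apply: eq_bigr => i _ /=.
by rewrite [in RHS]mxE ev_mulmx [r^T _ _]mxE; ring.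
Qed.

Lemma ybe_term_odot r p q c :
  \sum_i \sum_j \sum_k \sum_l
    r i j * r k l * tens3 (ev K k) (ev K i) (odot (ev K j) (ev K l)) p q c
  = odot (ev K q *m r) (ev K p *m r) 0 c.
Proof.
transitivity (\sum_j \sum_l r q j * r p l * odot (ev K j) (ev K l) 0 c).
  rewrite exchange_big; apply: eq_bigr => j _ /=.
  under eq_bigr => i _ do rewrite exchange_big.
  rewrite exchange_big; apply: eq_bigr => l _ /=.
  rewrite -(sum2_mul_ev (fun i k => r i j * r k l * odot (ev K j) (ev K l) 0 c)).
  by apply: eq_bigr => i _; apply: eq_bigr => k _; rewrite /tens3; ring.
rewrite (bilinear_expandl odot) summxE; apply: eq_bigr => j _.
rewrite [in RHS]mxE (bilinear_expandr odot) summxE big_distrr; apply: eq_bigr => l _ /=.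
by rewrite !ev_mulmx [in RHS]mxE; ring.
Qed.

Lemma ybe_term_prec r p q c :
  \sum_i \sum_j \sum_k \sum_l
    r i j * r k l * tens3 (ev K i) (prec (ev K j) (ev K k)) (ev K l) p q c
  = (ev K q *m (lin1_mx (prec (ev K p *m r)))^T *m r) 0 c.
Proof.
transitivity (\sum_j \sum_k r p j * r k c * prec (ev K j) (ev K k) 0 q).
  rewrite exchange_big; apply: eq_bigr => j _ /=.
  rewrite exchange_big; apply: eq_bigr => k _ /=.
  rewrite -(sum2_mul_ev (fun i l => r i j * r k l * prec (ev K j) (ev K k) 0 q)).
  by apply: eq_bigr => i _; apply: eq_bigr => l _; rewrite /tens3; ring.
rewrite exchange_big mxE; apply: eq_bigr => k _ /=.
rewrite ev_mulmx mxE lin1_mxE (bilinear_expandl prec) summxE big_distrl.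
by apply: eq_bigr => j _ /=; rewrite ev_mulmx [in RHS]mxE; ring.
Qed.

Lemma APN_YBE_contract r :
  APN_YBE succ prec r <-> forall p q, ybe_contract r (ev K p) (ev K q) = 0.
Proof.
have ybe_sumE p q c : \sum_i \sum_j \sum_k \sum_l r i j * r k l *
     (tens3 (circ (ev K i) (ev K k)) (ev K j) (ev K l) p q c
      + tens3 (ev K k) (ev K i) (odot (ev K j) (ev K l)) p q c
      + tens3 (ev K i) (prec (ev K j) (ev K k)) (ev K l) p q c)
    = ybe_contract r (ev K p) (ev K q) 0 c.
  rewrite 2!mxE -ybe_term_circ -ybe_term_odot -ybe_term_prec.
  by do 4 (rewrite -!big_split; apply: eq_bigr => ? _); rewrite !mulrDr.
split=> [ybe p q | ybe p q c]; last by rewrite ybe_sumE ybe mxE.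
by apply/rowP => c; rewrite -ybe_sumE ybe mxE.
Qed.

End APNStructureConstants.

Lemma Tmap_bij_unitmx (K : fieldType) (n : nat) (t : 'M[K]_n) :
  bijective (Tmap t) -> t \in unitmx.
Proof.
case=> g _ gK; suff /mulmx1_unit[] : \matrix_i g (ev K i) *m t = 1%:M by [].
by apply/row_matrixP => i; rewrite row_mul rowK row1 [LHS]gK.
Qed.

Lemma rb_P_add_trmx (K : fieldType) (n : nat) (lam : K) (r : 'M[K]_n) (x : 'rV[K]_n) :
  r + r^T \in unitmx -> rb_P lam r x + rb_P lam r^T x = - lam *: x.
Proof.
have sharpE (t : 'M[K]_n) :
    sharp (rb_omega lam t) x = - lam *: (x *m invmx (t + t^T)).
  by apply/rowP => j; rewrite !mxE /rb_omega pairing_ev mxE.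
move=> tU; rewrite /rb_P /Tmap !sharpE trmxK [r^T + r]addrC -mulmxDr -scalemxAl.
by rewrite mulmxKV.
Qed.

Theorem mainTheorem19 (K : fieldType) (n : nat)
  (cs cp : 'I_n -> 'I_n -> 'rV[K]_n) (s : 'M[K]_n) (lam : K) :
  is_APN (bmul cs) (bmul cp) ->
  factorizable (bmul cs) (bmul cp) s ->
  lam != 0 ->
  [/\ factorizable (bmul cs) (bmul cp) s^T,
      (forall x y : 'rV[K]_n, rb_omega lam s^T x y = rb_omega lam s x y) &
      (forall x : 'rV[K]_n, rb_P lam s^T x = - lam *: x - rb_P lam s x)].
Proof.
move=> _ [ybe inv bij] _; have tU := Tmap_bij_unitmx bij.
have tT : s^T + s^T^T = s + s^T by rewrite trmxK addrC.
split; last 2 first.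
- by move=> x y; rewrite /rb_omega tT.
- by move=> x; rewrite -(rb_P_add_trmx lam x tU) addrC addKr.
split; rewrite ?tT //; apply/APN_YBE_contract => p q.
have Q_compl (v : 'rV[K]_n) :
    mulmxr (invmx (s + s^T) *m s) v + mulmxr (invmx (s + s^T) *m s^T) v = - (-1) *: v.
  by rewrite /= -!mulmxDr mulVmx // mulmx1 opprK scale1r.
rewrite ybe_contract_rb_defect ?tT // (rb_defect_compl _ Q_compl).
by rewrite -ybe_contract_rb_defect // (APN_YBE_contract _ _ s).1.
Qed.
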